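(* Let $T$ be a c.n.u. contraction on $H$ and $x\in\mathbb{K}$. Then $\widehat{Tx}(\lambda)=\lambda\hat x(\lambda)$ for each $\lambda\in\mathbb{D}_+$, and $\widehat{Tx}(\lambda)=\hat x(\lambda)/\lambda$ for each $\lambda\in\mathbb{D}_-\setminus\{0_-\}$; more precisely $\hat x(\lambda)=\lambda\widehat{Tx}(\lambda)$ for all $\lambda\in\mathbb{D}_-$, and in particular $\hat x(0_-)=0$.
   Context: $H$ is an infinite-dimensional separable complex Hilbert space with inner product $(\cdot,\cdot)_H$; $T\in\mathbb{B}(H)$, $\|T\|\le1$, is completely non-unitary. $\mathbb{K}=\ker(I-T^*T)$. $\mathbb{H}=H\oplus_\perp H$ with $[(x_1,x_2),(y_1,y_2)]=i(x_1,y_1)_H-i(x_2,y_2)_H$; $S^{\perp_s}=\{a:[a,b]=0\ \forall b\in S\}$; $A_T=\{(x,Tx):x\in\mathbb{K}\}$. $\mathbb{D}_\pm$ are two copies of the open unit disc with centers $0_\pm$; for $\lambda\in\mathbb{D}_\pm$, $\bar\lambda$ is regarded as a point of $\mathbb{D}_\mp$. $N_\lambda=\{(x,\lambda x):x\in H\}\cap A_T^{\perp_s}$ for $\lambda\in\mathbb{D}_+$, and $N_\lambda=\{(\lambda x,x):x\in H\}\cap A_T^{\perp_s}$ for $\lambda\in\mathbb{D}_-$. Let $pr_1,pr_2$ be the projections of $\mathbb{H}$ onto its two copies of $H$; $E_\lambda=pr_1(N_\lambda)$ for $\lambda\in\mathbb{D}_+$ and $E_\lambda=pr_2(N_\lambda)$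 for $\lambda\in\mathbb{D}_-$. For $\lambda\in\mathbb{D}_+\cup\mathbb{D}_-$ set $F^\dagger_\lambda=E_{\bar\lambda}\subseteq H$, and let $F_\lambda$ be the space of continuous conjugate-linear functionals on $F^\dagger_\lambda$, with pairing $((\varphi,\omega))$. For $x\in H$, $\hat x$ is the section with $\hat x(\lambda)\in F_\lambda$ given by $((\hat x(\lambda),\omega))=(x,\omega)_H$ for $\omega\in F^\dagger_\lambda$. *)

From HB Require Import structures.
From mathcomp Require Import all_boot all_order all_algebra.
From mathcomp Require Import complex.
From mathcomp Require Import reals.
Set Implicit Arguments. Unset Strict Implicit. Unset Printing Implicit Defensive.
Import Order.TTheory GRing.Theory Num.Theory.
Local Open Scope ring_scope.

Section Hilbert.
Variable R : realType.
Local Notation C := (R[i]).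
Variable V : lmodType C.
Variable ip : V -> V -> C.  (* inner product (.,.)_H, linear in the first slot *)

Definition hnorm (x : V) : C := sqrtC (ip x x).

Definition is_inner_product : Prop :=
  [/\ forall (a : C) (x y z : V), ip (a *: x + y) z = a * ip x z + ip y z,
      forall x y : V, ip y x = (ip x y)^*,
      forall x : V, 0 <= ip x x &
      forall x : V, ip x x = 0 -> x = 0].

Definition complete_space : Prop :=
  forall u : nat -> V,
    (forall e : C, 0 < e -> exists N : nat, forall m n : nat,
        (N <= m)%N -> (N <= n)%N -> hnorm (u m - u n) < e) ->
    exists l : V, forall e : C, 0 < e -> exists N : nat, forall n : nat,
        (N <= n)%N -> hnorm (u n - l) < e.

Definition separable_space : Prop :=
  exists d : nat -> V, forall (x : V) (e : C), 0 < e ->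
    exists n : nat, hnorm (x - d n) < e.

Definition infinite_dimensional : Prop :=
  forall n : nat, exists v : 'I_n -> V,
    forall c : 'I_n -> C, \sum_(i < n) c i *: v i = 0 -> forall i, c i = 0.

Definition is_ID_sep_Hilbert : Prop :=
  [/\ is_inner_product, complete_space, separable_space & infinite_dimensional].

Definition is_linear_op (T : V -> V) : Prop :=
  forall (a : C) (x y : V), T (a *: x + y) = a *: T x + T y.

Definition is_adjoint (T Ts : V -> V) : Prop :=
  forall x y : V, ip (T x) y = ip x (Ts y).

Definition is_contraction (T : V -> V) : Prop :=
  forall x : V, hnorm (T x) <= hnorm x.

Definition closed_subspace (M : V -> Prop) : Prop :=
  [/\ M 0,
      forall (a : C) (x y : V), M x -> M y -> M (a *: x + y) &
      forall (u : nat -> V) (l : V), (forall n, M (u n)) ->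
        (forall e : C, 0 < e -> exists N : nat, forall n : nat,
            (N <= n)%N -> hnorm (u n - l) < e) -> M l].

(* completely non-unitary: no nonzero closed reducing subspace M on which
   T is unitary (T|M)^*(T|M) = I_M and (T|M)(T|M)^* = I_M, where, M being
   reducing, (T|M)^* = T^*|M. *)
Definition completely_non_unitary (T Ts : V -> V) : Prop :=
  forall M : V -> Prop, closed_subspace M ->
    (forall x, M x -> M (T x)) -> (forall x, M x -> M (Ts x)) ->
    (forall x, M x -> Ts (T x) = x /\ T (Ts x) = x) ->
    forall x, M x -> x = 0.

Definition Kspace (T Ts : V -> V) (x : V) : Prop := x - Ts (T x) = 0.

Definition sform (a b : V * V) : C :=
  'i * ip a.1 b.1 - 'i * ip a.2 b.2.

Definition s_perp (S : V * V -> Prop) (a : V * V) : Prop :=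
  forall b, S b -> sform a b = 0.

Definition A_T (T Ts : V -> V) (p : V * V) : Prop :=
  exists x, Kspace T Ts x /\ p = (x, T x).

(* points of D_+ u D_- ; |z| < 1 is imposed where points are quantified *)
Inductive dpoint := Dplus of C | Dminus of C.

Definition dbar (l : dpoint) : dpoint :=
  match l with Dplus z => Dminus z^* | Dminus z => Dplus z^* end.

Definition in_disc (l : dpoint) : Prop :=
  match l with Dplus z => `|z| < 1 | Dminus z => `|z| < 1 end.

Definition Nspace (T Ts : V -> V) (l : dpoint) (p : V * V) : Prop :=
  match l with
  | Dplus z => (exists x, p = (x, z *: x)) /\ s_perp (A_T T Ts) p
  | Dminus z => (exists x, p = (z *: x, x)) /\ s_perp (A_T T Ts) p
  end.

Definition Espace (T Ts : V -> V) (l : dpoint) (y : V) : Prop :=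
  exists p, Nspace T Ts l p /\
    y = match l with Dplus _ => p.1 | Dminus _ => p.2 end.

Definition Fdag (T Ts : V -> V) (l : dpoint) : V -> Prop := Espace T Ts (dbar l).

(* the functional hat x (lambda) in F_lambda, as a function on F^dagger_lambda:
   ((hat x (lambda), omega)) = (x, omega)_H *)
Definition xhat (x : V) (l : dpoint) (w : V) : C := ip x w.

(* equality in F_lambda: two functionals on F^dagger_lambda agree *)
Definition eqF (T Ts : V -> V) (l : dpoint) (phi psi : V -> C) : Prop :=
  forall w, Fdag T Ts l w -> phi w = psi w.

End Hilbert.

(* Orthogonality of (p1, p2) in A_T^{perp_s} to (x, Tx) reads (p1, x) = (p2, Tx).
   For w in F^dagger_lambda the pair p is (w, conj(lambda) w) or (conj(lambda) w, w),
   so conjugating this identity gives (x, w) = lambda (Tx, w), resp.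
   (Tx, w) = lambda (x, w). *)
From HB Require Import structures.
From mathcomp Require Import all_boot all_order all_algebra.
From mathcomp Require Import complex.
From mathcomp Require Import reals.
Set Implicit Arguments. Unset Strict Implicit. Unset Printing Implicit Defensive.
Import Order.TTheory GRing.Theory Num.Theory.
Local Open Scope ring_scope.

Section ShiftOnDefectSpace.
Variables (R : realType) (V : lmodType R[i]) (ip : V -> V -> R[i]).
Hypothesis ipDl : forall a (u v w : V), ip (a *: u + v) w = a * ip u w + ip v w.
Hypothesis ip_conj : forall u v : V, ip v u = (ip u v)^*.

Lemma ip0l (w : V) : ip 0 w = 0.
Proof.
have := ipDl 1 0 0 w; rewrite scaler0 addr0 mul1r -{1}[ip 0 w]addr0.
by move/addrI/esym.
Qed.

Lemma ipZl a (u w : V) : ip (a *: u) w = a * ip u w.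
Proof. by rewrite -[a *: u]addr0 ipDl ip0l addr0. Qed.

Lemma ipZr a (u w : V) : ip u (a *: w) = a^* * ip u w.
Proof. by rewrite ip_conj ipZl rmorphM /= -ip_conj. Qed.

Lemma sform_eq0 (p q : V * V) : sform ip p q = 0 -> ip p.1 q.1 = ip p.2 q.2.
Proof. by move/eqP; rewrite subr_eq0 => /eqP /mulfI; apply; apply: neq0Ci. Qed.

Variables (T Ts : V -> V) (x : V).
Hypothesis Kx : Kspace T Ts x.

Lemma s_perp_A_T_ip (p : V * V) :
  s_perp ip (A_T T Ts) p -> ip p.1 x = ip p.2 (T x).
Proof. by move=> perp_p; apply: (@sform_eq0 p (x, T x)); apply: perp_p; exists x. Qed.

Lemma Fdag_Dplus_shift z w : Fdag ip T Ts (Dplus z) w -> ip (T x) w = z * ip x w.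
Proof.
move=> [p [[[y ->] /s_perp_A_T_ip /= Ey] /= ->]].
by rewrite ip_conj -Ey -ip_conj ipZr conjCK.
Qed.

Lemma Fdag_Dminus_shift z w : Fdag ip T Ts (Dminus z) w -> ip x w = z * ip (T x) w.
Proof.
move=> [p [[[y ->] /s_perp_A_T_ip /= Ey] /= ->]].
by rewrite ip_conj Ey -ip_conj ipZr conjCK.
Qed.

End ShiftOnDefectSpace.

Theorem lemma4p9 (R : realType) (V : lmodType R[i]) (ip : V -> V -> R[i])
    (T Ts : V -> V) (x : V) :
  is_ID_sep_Hilbert ip ->
  is_linear_op T -> is_adjoint ip T Ts -> is_contraction ip T ->
  completely_non_unitary ip T Ts ->
  Kspace T Ts x ->
  [/\ (forall z : R[i], in_disc (Dplus z) ->
         eqF ip T Ts (Dplus z) (xhat ip (T x) (Dplus z))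
                                (fun w => z * xhat ip x (Dplus z) w)),
      (forall z : R[i], in_disc (Dminus z) -> z != 0 ->
         eqF ip T Ts (Dminus z) (xhat ip (T x) (Dminus z))
                                 (fun w => z^-1 * xhat ip x (Dminus z) w)),
      (forall z : R[i], in_disc (Dminus z) ->
         eqF ip T Ts (Dminus z) (xhat ip x (Dminus z))
                                 (fun w => z * xhat ip (T x) (Dminus z) w)) &
      eqF ip T Ts (Dminus 0) (xhat ip x (Dminus 0)) (fun _ => 0)].
Proof.
move=> [[ipDl ip_conj _ _] _ _ _] _ _ _ _ Kx.
have minus_shift := Fdag_Dminus_shift ipDl ip_conj Kx.
split.
- by move=> z _ w /(Fdag_Dplus_shift ipDl ip_conj Kx).
- by move=> z _ z_neq0 w /minus_shift; rewrite /xhat => ->; rewrite (mulKf z_neq0).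
- by move=> z _ w /minus_shift.
- by move=> w /minus_shift; rewrite /xhat mul0r.
Qed.
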